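(* Let $R$ be a commutative ring and $S$ a subset of $R$. Consider: (a) $S$ is coprincipal; (b) there are rings $R_1,R_2$ with $R=R_1\times R_2$ such that $S\cap(R_1)^\times\neq\emptyset$ and $s\cdot(1,0)\in(R_1)^\times$ for all $s\in S$. Then (b) implies (a). If moreover $S$ is multiplicatively closed, then (a) implies (b).
   Context: $S$ is coprincipal if $S\ne\emptyset$ and there exists $s\in S$ with $s\in\bigcap_{r\in S}Rr$. $(R_1)^\times$ denotes the units of $R_1$, and $R_1$ is identified with the subset $R_1\times\{0\}$ of $R$, so $(R_1)^\times=\{(u,0):u \text{ a unit of } R_1\}$. *)

From mathcomp Require Import all_boot all_algebra.
Set Implicit Arguments. Unset Strict Implicit. Unset Printing Implicit Defensive.
Import GRing.Theory.
Local Open Scope ring_scope.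

Definition is_unit (R : comPzRingType) (u : R) : Prop := exists v : R, u * v = 1.

Definition in_principal (R : comPzRingType) (r x : R) : Prop := exists a : R, x = a * r.

Definition coprincipal (R : comPzRingType) (S : R -> Prop) : Prop :=
  (exists s, S s) /\ exists s, S s /\ forall r, S r -> in_principal r s.

Definition mult_closed (R : comPzRingType) (S : R -> Prop) : Prop :=
  S 1 /\ forall x y, S x -> S y -> S (x * y).

(* (b): R = R1 x R2 (via a ring isomorphism f), with R1 identified with R1 x {0}. *)
Definition product_condition (R : comPzRingType) (S : R -> Prop) : Prop :=
  exists (R1 R2 : comPzRingType) (f : {rmorphism R -> (R1 * R2)%type}),
    bijective f /\
    (exists s, S s /\ exists u : R1, is_unit u /\ f s = (u, 0)) /\
    (forall s, S s -> exists u : R1, is_unit u /\ f s * (1, 0) = (u, 0)).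

(* If [s0] lies in every [R r], [r \in S], and [s0 = a s0^2], then [e := a s0]
   is an idempotent with [s0 e = s0], so [R] splits as [Re x R(1 - e)]; there
   [s0] becomes [(s0 e, 0)], a unit of [Re] with inverse [a e], and any
   [r \in S] with [s0 = b r] has unit component [r e], with inverse [b a e].
   Conversely, if [s0 = (u, 0)] and [r (1, 0) = (v, 0)] with [u, v] units, then
   [s0 = (u v^-1, 0) r]. *)

From HB Require Import structures.
From mathcomp Require Import all_boot all_algebra.
Set Implicit Arguments. Unset Strict Implicit. Unset Printing Implicit Defensive.
Import GRing.Theory.
Local Open Scope ring_scope.

Section CornerRing.
Variables (R : comPzRingType) (e : R).
Hypothesis idem_e : e * e = e.

Definition corner of e * e = e := {x : R | x * e == x}.
Local Notation Re := (corner idem_e).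
HB.instance Definition _ := Choice.on Re.

Lemma corner_fixed (x : Re) : val x * e = val x.
Proof. exact/eqP/(valP x). Qed.

Lemma corner_zero_subproof : (0 : R) * e == 0.
Proof. by rewrite mul0r. Qed.
Lemma corner_one_subproof : e * e == e.
Proof. by rewrite idem_e. Qed.
Lemma corner_opp_subproof (x : Re) : - val x * e == - val x.
Proof. by rewrite mulNr corner_fixed. Qed.
Lemma corner_add_subproof (x y : Re) : (val x + val y) * e == val x + val y.
Proof. by rewrite mulrDl !corner_fixed. Qed.
Lemma corner_mul_subproof (x y : Re) : val x * val y * e == val x * val y.
Proof. by rewrite -mulrA corner_fixed. Qed.
Lemma corner_of_subproof (x : R) : x * e * e == x * e.
Proof. by rewrite -mulrA idem_e. Qed.

Definition corner_zero : Re := exist _ 0 corner_zero_subproof.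
Definition corner_one : Re := exist _ e corner_one_subproof.
Definition corner_opp (x : Re) : Re := exist _ (- val x) (corner_opp_subproof x).
Definition corner_add (x y : Re) : Re := exist _ (val x + val y) (corner_add_subproof x y).
Definition corner_mul (x y : Re) : Re := exist _ (val x * val y) (corner_mul_subproof x y).
Definition corner_of (x : R) : Re := exist _ (x * e) (corner_of_subproof x).

Lemma corner_addA : associative corner_add.
Proof. by move=> x y z; apply: val_inj; rewrite /= addrA. Qed.
Lemma corner_addC : commutative corner_add.
Proof. by move=> x y; apply: val_inj; rewrite /= addrC. Qed.
Lemma corner_add0r : left_id corner_zero corner_add.
Proof. by move=> x; apply: val_inj; rewrite /= add0r. Qed.
Lemma corner_addNr : left_inverse corner_zero corner_opp corner_add.
Proof. by move=> x; apply: val_inj; rewrite /= addNr. Qed.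
HB.instance Definition _ :=
  GRing.isZmodule.Build Re corner_addA corner_addC corner_add0r corner_addNr.

Lemma corner_mulA : associative corner_mul.
Proof. by move=> x y z; apply: val_inj; rewrite /= mulrA. Qed.
Lemma corner_mulC : commutative corner_mul.
Proof. by move=> x y; apply: val_inj; rewrite /= mulrC. Qed.
Lemma corner_mul1r : left_id corner_one corner_mul.
Proof. by move=> x; apply: val_inj; rewrite /= mulrC corner_fixed. Qed.
Lemma corner_mulDl : left_distributive corner_mul corner_add.
Proof. by move=> x y z; apply: val_inj; rewrite /= mulrDl. Qed.
HB.instance Definition _ :=
  GRing.Zmodule_isComPzRing.Build Re corner_mulA corner_mulC corner_mul1r corner_mulDl.

Lemma corner_of_eq0 (x : R) : x * e = 0 -> corner_of x = 0.
Proof. by move=> xe0; apply: val_inj. Qed.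

Lemma is_unit_corner_of (x y : R) : x * y = e -> is_unit (corner_of x).
Proof. by move=> xy; exists (corner_of y); apply: val_inj; rewrite /= mulrACA xy !idem_e. Qed.

End CornerRing.

Lemma idempotentB1 (R : comPzRingType) (e : R) : e * e = e -> (1 - e) * (1 - e) = 1 - e.
Proof. by move=> idem_e; rewrite mulrBl mul1r mulrBr mulr1 idem_e subrr subr0. Qed.

Section CornerSplit.
Variables (R : comPzRingType) (e : R).
Hypothesis idem_e : e * e = e.
Let idem_1e := idempotentB1 idem_e.

Definition corner_split (x : R) : (corner idem_e * corner idem_1e)%type :=
  (corner_of idem_e x, corner_of idem_1e x).

Lemma corner_split_is_zmod_morphism : zmod_morphism corner_split.
Proof. by move=> x y; congr pair; apply: val_inj; rewrite /= mulrBl. Qed.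
HB.instance Definition _ :=
  GRing.isZmodMorphism.Build R _ corner_split corner_split_is_zmod_morphism.

Lemma corner_split_is_monoid_morphism : monoid_morphism corner_split.
Proof.
split; first by congr pair; apply: val_inj; rewrite /= mul1r.
by move=> x y; congr pair; apply: val_inj; rewrite /= mulrACA ?idem_e ?idem_1e.
Qed.
HB.instance Definition _ :=
  GRing.isMonoidMorphism.Build R _ corner_split corner_split_is_monoid_morphism.

Lemma corner_split_bij : bijective corner_split.
Proof.
have e_1e : e * (1 - e) = 0 by rewrite mulrBr mulr1 idem_e subrr.
exists (fun p => val p.1 + val p.2).
  by move=> x; rewrite /= -mulrDr addrC subrK mulr1.
move=> [[x xe] [y y1e]]; congr pair; apply: val_inj => /=; move: xe y1e => /eqP xe /eqP y1e.
  by rewrite mulrDl xe -y1e -mulrA [(1 - e) * e]mulrC e_1e mulr0 addr0.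
by rewrite mulrDl y1e -xe -mulrA e_1e mulr0 add0r.
Qed.

End CornerSplit.

Lemma product_condition_coprincipal (R : comPzRingType) (S : R -> Prop) :
  product_condition S -> coprincipal S.
Proof.
move=> [R1 [R2 [f [[g fK gK] [[s0 [Ss0 [u [[u' uu'] fs0]]]] unit_S]]]]].
split; first by exists s0.
exists s0; split => // r Sr.
have [v [[v' vv'] fr1]] := unit_S r Sr.
exists (g (u * v', 0)); apply: (can_inj fK); rewrite rmorphM gK fs0.
move: fr1; case: (f r) => r1 r2 [] /=; rewrite mulr1 => -> _.
by congr pair => /=; rewrite ?mul0r // -mulrA [v' * v]mulrC vv' mulr1.
Qed.

Lemma coprincipal_witness_product_condition (R : comPzRingType) (S : R -> Prop) (s0 : R) :
  S s0 -> (forall r, S r -> in_principal r s0) -> in_principal (s0 * s0) s0 ->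
  product_condition S.
Proof.
move=> Ss0 s0_div [a s0_sq].
pose e := a * s0.
have idem_e : e * e = e by rewrite /e mulrACA -mulrA -s0_sq.
have s0e : s0 * e = s0 by rewrite /e mulrCA -s0_sq.
have s0a : s0 * a = e by rewrite mulrC.
exists (corner idem_e), (corner (idempotentB1 idem_e)), (corner_split idem_e).
split; first exact: corner_split_bij.
split.
  exists s0; split => //; exists (corner_of idem_e s0).
  split; first exact: is_unit_corner_of s0a.
  by congr pair; apply: corner_of_eq0; rewrite mulrBr mulr1 s0e subrr.
move=> r Sr; have [b s0_br] := s0_div r Sr.
have rba : r * (b * a) = e by rewrite mulrA [r * b]mulrC -s0_br.
exists (corner_of idem_e r); split; first exact: is_unit_corner_of rba.
by congr pair => /=; rewrite ?mulr1 ?mulr0.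
Qed.

Theorem lemma3p14 (R : comPzRingType) (S : R -> Prop) :
  (product_condition S -> coprincipal S) /\
  (mult_closed S -> coprincipal S -> product_condition S).
Proof.
split; first exact: product_condition_coprincipal.
move=> [_ S_mul] [_ [s0 [Ss0 s0_div]]].
exact: coprincipal_witness_product_condition Ss0 s0_div (s0_div _ (S_mul _ _ Ss0 Ss0)).
Qed.
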